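(* Let $\epsilon>0$ and $\delta\in(0,1)$, and set $\delta'=\delta+e^{\epsilon}Q(\sqrt{2\epsilon})$; assume $\delta'<1$. For $x\in(0,1)$ let $\mathcal{R}_\epsilon(x)=\sqrt{(Q^{-1}(x))^2+2\epsilon}-Q^{-1}(x)$. Then the function $\mathcal{B}_{\epsilon,\delta}(\mu)=Q\!\left(\tfrac{\epsilon}{\mu}-\tfrac{\mu}{2}\right)-e^{\epsilon}Q\!\left(\tfrac{\epsilon}{\mu}+\tfrac{\mu}{2}\right)-\delta$ satisfies $\mathcal{B}_{\epsilon,\delta}(\mathcal{R}_\epsilon(\delta))\le 0\le \mathcal{B}_{\epsilon,\delta}(\mathcal{R}_\epsilon(\delta'))$; consequently, any $\mu_0>0$ with $\mathcal{B}_{\epsilon,\delta}(\mu_0)=0$ lies in the interval $[\mathcal{R}_\epsilon(\delta),\mathcal{R}_\epsilon(\delta')]$, and such a $\mu_0$ exists in this interval.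
   Context: $Q(\cdot)$ denotes the survival function of the standard normal distribution, $Q(x)=\mathbb{P}\{Z>x\}$, $Z\sim\mathcal{N}(0,1)$, and $Q^{-1}$ its inverse on $(0,1)$. *)

From Stdlib Require Import Reals Lra ClassicalEpsilon.
From Coquelicot Require Import Coquelicot.
Open Scope R_scope.

Definition Q (x : R) : R :=
  / sqrt (2 * PI) *
  RInt_gen (fun t => exp (- (t ^ 2) / 2)) (at_point x) (Rbar_locally p_infty).

(* Q^{-1}(y): the (unique, since Q is strictly decreasing) x with Q x = y;
   only meaningful for y in (0,1). *)
Definition Qinv (y : R) : R :=
  epsilon (inhabits 0) (fun x => Q x = y).

Definition Reps (eps x : R) : R :=
  sqrt ((Qinv x) ^ 2 + 2 * eps) - Qinv x.

Definition Bed (eps delta mu : R) : R :=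
  Q (eps / mu - mu / 2) - exp eps * Q (eps / mu + mu / 2) - delta.

From Stdlib Require Import Reals Ranalysis5 Lra ClassicalEpsilon.
From Coquelicot Require Import Coquelicot.
Open Scope R_scope.

(* Writing [Phi0 x] for the integral of [exp (- t^2 / 2)] over [0, x], one has
   [Q x = 1/2 - Phi0 x / sqrt (2 PI)]; the Gaussian integral (sqrt PI / 2 for
   [exp (- t^2)] on [0, +oo)) makes [Q] a decreasing bijection from R onto (0, 1),
   so [Qinv] inverts it there.  For [mu = Reps eps x] one has
   [eps / mu - mu / 2 = Qinv x] and [eps / mu + mu / 2 = sqrt (Qinv x ^ 2 + 2 eps)],
   hence [Bed (Reps delta) = - e^eps Q (..) < 0] and
   [Bed (Reps delta') = e^eps (Q (sqrt (2 eps)) - Q (..)) >= 0].  Finally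
   [e^eps phi (eps/mu + mu/2) = phi (eps/mu - mu/2)] makes the derivative of [Bed]
   equal to [phi (eps/mu - mu/2) / sqrt (2 PI) > 0], so [Bed] is strictly increasing
   on (0, +oo): its zeros lie between the two points, and the intermediate value
   theorem provides one. *)

Definition gauss (t : R) : R := exp (- (t ^ 2)).

Definition gauss_int (x : R) : R := RInt gauss 0 x.

Lemma continuous_gauss x : continuous gauss x.
Proof.
apply (ex_derive_continuous (K := R_AbsRing) (V := R_NormedModule)).
unfold gauss. auto_derive. easy.
Qed.

Lemma is_derive_gauss_int x : is_derive gauss_int x (gauss x).
Proof.
apply (is_derive_RInt gauss gauss_int 0); [|apply continuous_gauss].
apply filter_forall; intros b. apply (RInt_correct (V := R_CompleteNormedModule)).
apply ex_RInt_continuous; intros z _. apply continuous_gauss.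
Qed.

Lemma gauss_int0 : gauss_int 0 = 0.
Proof. apply (RInt_point (V := R_CompleteNormedModule)). Qed.

(* MathComp-Analysis computes the Gaussian integral; its [pi] and its derivatives
   are transferred here to Stdlib's [PI] and [derivable_pt_lim]. *)
Module GaussianIntegral.
From mathcomp Require Import all_boot all_order all_algebra.
From mathcomp Require Import all_classical all_reals all_analysis.
From mathcomp Require Import Rstruct Rstruct_topology.
From mathcomp Require Import ring lra.
Import Order.TTheory GRing.Theory Num.Theory numFieldNormedType.Exports.
Import gauss_integral_proof.
Local Open Scope classical_set_scope.
Local Open Scope ring_scope.

(* Stdlib's [R] seen through its [realType] instance. *)
Local Notation RR := (Real.sort RbaseSymbolsImpl_R__canonical__reals_Real).

Lemma is_derive_derivable_pt_lim (f : RR -> RR) (a l : RR) :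
  derivable_pt_lim f a l -> is_derive a 1 f l.
Proof.
move=> fl.
have dfl : (fun h : RR => h^-1 *: ((f \o shift a) (h *: 1) - f a)) @ 0^' --> l.
  apply/cvgrPdist_lt => e e0.
  have [[d d0] fd] := fl e (elimT RltP e0).
  apply/nbhs_ballP; exists d => /=; first exact/RltP.
  move=> t; rewrite /ball /= sub0r normrN => td tn0.
  have /RltP := fd t (elimN eqP tn0) (elimT RltP td).
  by rewrite distrC /GRing.scale /= mulr1 (addrC t) mulrC.
have fa : derivable f a 1 by apply/cvg_ex; exists l.
by split=> //; rewrite -derive1E derive1E; apply/cvg_lim.
Qed.

Local Notation Rsin := (Rtrigo_def.sin : RR -> RR).
Local Notation Rcos := (Rtrigo_def.cos : RR -> RR).

#[local] Instance is_derive_Rsin (x : RR) : is_derive x 1 Rsin (Rcos x).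
Proof. exact/is_derive_derivable_pt_lim/derivable_pt_lim_sin. Qed.

#[local] Instance is_derive_Rcos (x : RR) : is_derive x 1 Rcos (- Rsin x).
Proof. exact/is_derive_derivable_pt_lim/derivable_pt_lim_cos. Qed.

(* The squared distance between (sin, cos) and (Rsin, Rcos) has derivative 0
   and vanishes at 0. *)
Lemma cos_Rcos (x : RR) : cos x = Rcos x.
Proof.
pose d (y : RR) := (sin y - Rsin y) ^+ 2 + (cos y - Rcos y) ^+ 2.
have d_const : d x = d 0.
  apply: is_derive_0_is_cst => {}x.
  by apply: trigger_derive; rewrite /GRing.scale /=; ring.
have /eqP : d x = 0.
  by rewrite d_const /d cos0 sin0 sin_0 cos_0 !(subrr, expr0n, addr0).
rewrite paddr_eq0 ?sqr_ge0 // => /andP[_].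
by rewrite sqrf_eq0 subr_eq0 => /eqP.
Qed.

Lemma pi_PI : pi = PI :> RR.
Proof.
have PI_le4 : PI <= 4 by have := PI_4; rewrite IZRposE INRE => /RleP.
have PI_gt0 : 0 < PI by exact/RltP/PI_RGT_0.
have pi_ge2 := @pi_ge2 RbaseSymbolsImpl_R__canonical__reals_Real.
suff : PI / 2 = pi / 2 by move=> /(congr1 ( *%R^~ 2)); rewrite !divfK.
apply: cos_inj; last by rewrite cos_Rcos cos_PI2 cos_pihalf.
all: rewrite in_itv /=; apply/andP; split; lra.
Qed.

Lemma gauss_int_integral0_gauss (x : RR) :
  0 < x -> integral0_gauss x = gauss_int x.
Proof.
move=> x0.
have dG (y : RR) : is_derive y 1 (gauss_int : RR -> RR) (gauss_fun y).
  apply: is_derive_derivable_pt_lim.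
  rewrite /gauss_fun -RexpE -RpowE; exact/is_derive_Reals/is_derive_gauss_int.
have cG : continuous (gauss_int : RR -> RR).
  by move=> y; apply/differentiable_continuous/derivable1_diffP; case: (dG y).
have cf : {within `[0, x], continuous (@gauss_fun RR)}.
  exact/continuous_subspaceT/continuous_gauss_fun.
have dF : derivable_oo_LRcontinuous (gauss_int : RR -> RR) 0 x.
  split; first by move=> y _; case: (dG y).
  - exact: cvg_at_right_filter (cG 0).
  - exact: cvg_at_left_filter (cG x).
rewrite /integral0_gauss /Rintegral (continuous_FTC2 x0 cf dF); last first.
  by move=> y _; rewrite derive1E; case: (dG y).
by rewrite gauss_int0 -EFinB subr0.
Qed.

Lemma cvg_gauss_int : (gauss_int : RR -> RR) x @[x --> +oo] --> Num.sqrt pi / 2.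
Proof.
have sqrt_pi4 : Num.sqrt (pi / 4) = Num.sqrt pi / 2 :> RR.
  have -> : 4 = 2 ^+ 2 :> RR by rewrite expr2 -natrM.
  by rewrite sqrtrM ?pi_ge0 // sqrtrV // sqrtr_sqr ger0_norm.
rewrite -sqrt_pi4.
have : Num.sqrt (integral0_gauss x ^+ 2) @[x --> +oo] --> Num.sqrt (pi / 4 : RR).
  by apply: continuous_cvg; [exact: sqrt_continuous|exact: cvg_integral0_gauss_sqr].
apply: cvg_trans; apply: near_eq_cvg; near=> x.
rewrite sqrtr_sqr ger0_norm ?integral0_gauss_ge0 // gauss_int_integral0_gauss //.
Unshelve. all: end_near. Qed.

Lemma gauss_int_near_limit (eps : R) : (0 < eps)%coqR ->
  exists M : R, forall x : R, (M < x)%coqR ->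
    (Rabs (gauss_int x - sqrt PI / 2) < eps)%coqR.
Proof.
move=> /RltP e0; have [M [_ HM]] := (cvgrPdist_lt _ _).1 cvg_gauss_int _ e0.
exists M => x /RltP /HM; rewrite distrC pi_PI RsqrtE => /RltP.
by rewrite /Rdiv IZRposE INRE.
Qed.

End GaussianIntegral.

Lemma is_lim_gauss_int : is_lim gauss_int p_infty (sqrt PI / 2).
Proof.
apply is_lim_spec. intros eps.
apply GaussianIntegral.gauss_int_near_limit, cond_pos.
Qed.

Lemma increasing_lt_lim (f : R -> R) (l : R) :
  (forall x y, x < y -> f x < f y) -> is_lim f p_infty l -> forall x, f x < l.
Proof.
intros f_incr fl x.
assert (H : Rbar_le (f (x + 1)) l).
{ apply (is_lim_le_loc (fun _ => f (x + 1)) f p_infty); [|apply is_lim_const|exact fl].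
  exists (x + 1). intros y Hy. left. apply f_incr, Hy. }
simpl in H. assert (Hx := f_incr x (x + 1) ltac:(lra)). lra.
Qed.

Section RootOfIncreasing.

Variable f : R -> R.
Hypothesis f_incr : forall x y, 0 < x -> x < y -> f x < f y.
Hypothesis f_cont : forall x, 0 < x -> continuity_pt f x.
Variables a b : R.
Hypotheses (a_pos : 0 < a) (b_pos : 0 < b) (fa_le0 : f a <= 0) (fb_ge0 : 0 <= f b).

Lemma root_between mu : 0 < mu -> f mu = 0 -> a <= mu <= b.
Proof.
intros mu_pos fmu. split.
- destruct (Rle_or_lt a mu) as [H|H]; [exact H|].
  assert (H' := f_incr mu a mu_pos H). lra.
- destruct (Rle_or_lt mu b) as [H|H]; [exact H|].
  assert (H' := f_incr b mu b_pos H). lra.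
Qed.

Lemma exists_root_between : exists mu, 0 < mu /\ a <= mu <= b /\ f mu = 0.
Proof.
destruct (Req_dec (f a) 0) as [fa0|fa_neq0].
{ exists a. assert (H := root_between a a_pos fa0). repeat split; lra. }
destruct (Req_dec (f b) 0) as [fb0|fb_neq0].
{ exists b. assert (H := root_between b b_pos fb0). repeat split; lra. }
assert (Hab : a < b).
{ destruct (Rlt_or_le a b) as [H|[H|H]]; [exact H| |subst; lra].
  assert (H' := f_incr b a b_pos H). lra. }
destruct (IVT_interv f a b) as [mu [Hmu fmu]]; try lra.
- intros x Hx. apply f_cont. lra.
- exists mu. repeat split; lra.
Qed.

End RootOfIncreasing.

Definition phi (t : R) : R := exp (- (t ^ 2) / 2).

Definition Phi0 (x : R) : R := RInt phi 0 x.

Lemma phi_pos t : 0 < phi t.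
Proof. apply exp_pos. Qed.

Lemma phi_opp t : phi (- t) = phi t.
Proof. unfold phi. replace ((- t) ^ 2) with (t ^ 2) by ring. reflexivity. Qed.

Lemma continuous_phi t : continuous phi t.
Proof.
apply (ex_derive_continuous (K := R_AbsRing) (V := R_NormedModule)).
unfold phi. auto_derive. easy.
Qed.

Lemma ex_RInt_phi a b : ex_RInt phi a b.
Proof.
apply (ex_RInt_continuous (V := R_CompleteNormedModule)). intros t _. apply continuous_phi.
Qed.

Lemma is_derive_Phi0 x : is_derive Phi0 x (phi x).
Proof.
apply (is_derive_RInt phi Phi0 0); [|apply continuous_phi].
apply filter_forall; intros b. apply (RInt_correct (V := R_CompleteNormedModule)), ex_RInt_phi.
Qed.

Lemma continuity_pt_Phi0 x : continuity_pt Phi0 x.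
Proof.
apply continuity_pt_filterlim, (ex_derive_continuous (K := R_AbsRing) (V := R_NormedModule)).
eexists. apply is_derive_Phi0.
Qed.

Lemma Phi0_increasing x y : x < y -> Phi0 x < Phi0 y.
Proof.
intros Hxy.
destruct (MVT_gen Phi0 x y phi) as [c [_ Hc]].
- intros t _. apply is_derive_Phi0.
- intros t _. apply continuity_pt_Phi0.
- assert (H := phi_pos c). nra.
Qed.

Lemma Phi0_opp x : Phi0 (- x) = - Phi0 x.
Proof.
assert (H := RInt_comp_lin phi (-1) 0 0 x (ex_RInt_phi _ _)).
replace (-1 * 0 + 0) with 0 in H by ring.
replace (-1 * x + 0) with (- x) in H by ring.
unfold Phi0. rewrite <- H, <- (RInt_opp (V := R_CompleteNormedModule)) by apply ex_RInt_phi.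
apply RInt_ext. intros y _.
change (-1 * phi (-1 * y + 0) = - phi y).
replace (-1 * y + 0) with (- y) by ring. rewrite phi_opp. ring.
Qed.

Lemma Phi0_gauss_int x : Phi0 x = sqrt 2 * gauss_int (x / sqrt 2).
Proof.
assert (Hs : 0 < sqrt 2) by (apply sqrt_lt_R0; lra).
assert (Hs2 : sqrt 2 * sqrt 2 = 2) by (apply sqrt_sqrt; lra).
assert (H := RInt_comp_lin gauss (/ sqrt 2) 0 0 x).
rewrite Rmult_0_r, Rplus_0_r, Rplus_0_r, Rmult_comm in H.
unfold gauss_int, Rdiv. rewrite <- H.
- rewrite (RInt_ext _ (fun y => scal (/ sqrt 2) (phi y))).
  + rewrite (RInt_scal (V := R_CompleteNormedModule)) by apply ex_RInt_phi.
    unfold Phi0, scal. simpl. unfold mult. simpl.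
    rewrite <- Rmult_assoc, Rinv_r, Rmult_1_l by lra. reflexivity.
  + intros y _. f_equal. unfold gauss, phi. rewrite Rplus_0_r. f_equal.
    replace ((/ sqrt 2 * y) ^ 2) with (y ^ 2 / (sqrt 2 * sqrt 2)) by (field; lra).
    rewrite Hs2. field.
- apply (ex_RInt_continuous (V := R_CompleteNormedModule)). intros t _. apply continuous_gauss.
Qed.

Lemma sqrt_2PI_pos : 0 < sqrt (2 * PI).
Proof. apply sqrt_lt_R0. generalize PI_RGT_0. lra. Qed.

Lemma is_lim_Phi0 : is_lim Phi0 p_infty (sqrt (2 * PI) / 2).
Proof.
assert (Hs : 0 < / sqrt 2) by (apply Rinv_0_lt_compat, sqrt_lt_R0; lra).
apply (is_lim_ext (fun x => sqrt 2 * gauss_int (x / sqrt 2))).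
{ intros x. symmetry. apply Phi0_gauss_int. }
replace (sqrt (2 * PI) / 2) with (sqrt 2 * (sqrt PI / 2))
  by (rewrite sqrt_mult_alt by lra; field).
apply (is_lim_scal_l _ _ _ (sqrt PI / 2)).
apply (is_lim_comp gauss_int _ p_infty _ p_infty).
- apply is_lim_gauss_int.
- replace p_infty with (Rbar_mult p_infty (/ sqrt 2)) at 2
    by (simpl; destruct Rle_dec; [destruct Rle_lt_or_eq_dec|]; auto; lra).
  apply is_lim_scal_r, is_lim_id.
- exists 0. intros y _. discriminate.
Qed.

Lemma is_lim_Phi0_minfty : is_lim Phi0 m_infty (- (sqrt (2 * PI) / 2)).
Proof.
apply (is_lim_ext (fun x => - Phi0 (- x))).
{ intros x. rewrite Phi0_opp. ring. }
apply (is_lim_opp _ _ (sqrt (2 * PI) / 2)).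
apply (is_lim_comp Phi0 _ m_infty _ p_infty).
- apply is_lim_Phi0.
- apply (is_lim_opp _ _ m_infty), is_lim_id.
- exists 0. intros y _. discriminate.
Qed.

Lemma Q_Phi0 x : Q x = / 2 - Phi0 x / sqrt (2 * PI).
Proof.
assert (Hs := sqrt_2PI_pos).
assert (HI : is_RInt_gen phi (at_point x) (Rbar_locally p_infty)
               (sqrt (2 * PI) / 2 - Phi0 x)).
{ apply (is_RInt_gen_ext (Derive Phi0)).
  - apply filter_forall. intros ab y _. apply is_derive_unique, is_derive_Phi0.
  - apply is_RInt_gen_Derive.
    + apply filter_forall. intros ab y _. eexists. apply is_derive_Phi0.
    + apply filter_forall. intros ab y _.
      apply (continuous_ext phi); [|apply continuous_phi].
      intros t. symmetry. apply is_derive_unique, is_derive_Phi0.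
    + intros P HP. unfold filtermap, at_point. apply locally_singleton, HP.
    + apply is_lim_Phi0. }
change (/ sqrt (2 * PI) * RInt_gen phi (at_point x) (Rbar_locally p_infty)
          = / 2 - Phi0 x / sqrt (2 * PI)).
rewrite (is_RInt_gen_unique _ _ HI). field. lra.
Qed.

Lemma Q_pos x : 0 < Q x.
Proof.
assert (Hs := sqrt_2PI_pos).
assert (H := increasing_lt_lim Phi0 _ Phi0_increasing is_lim_Phi0 x).
rewrite Q_Phi0. apply Rlt_0_minus.
apply (Rmult_lt_reg_r (sqrt (2 * PI))); [exact Hs|].
unfold Rdiv. rewrite Rmult_assoc, Rinv_l by lra. lra.
Qed.

Lemma Q_decreasing x y : x < y -> Q y < Q x.
Proof.
intros Hxy. assert (Hs := sqrt_2PI_pos).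
assert (H := Phi0_increasing _ _ Hxy).
rewrite !Q_Phi0. apply Rplus_lt_compat_l, Ropp_lt_contravar.
apply Rmult_lt_compat_r; [apply Rinv_0_lt_compat|]; assumption.
Qed.

Lemma Q_nonincreasing x y : x <= y -> Q y <= Q x.
Proof. intros [H|<-]; [left; apply Q_decreasing, H|right; reflexivity]. Qed.

Lemma Q_Qinv d : 0 < d < 1 -> Q (Qinv d) = d.
Proof.
intros Hd. assert (Hs := sqrt_2PI_pos).
unfold Qinv. apply epsilon_spec.
destruct (IVT_Rbar_incr Phi0 m_infty p_infty _ _ (sqrt (2 * PI) * (/ 2 - d))
            is_lim_Phi0_minfty is_lim_Phi0) as [x [_ [_ Hx]]].
- intros x _ _. apply continuity_pt_Phi0.
- exact I.
- simpl. split; nra.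
- exists x. rewrite Q_Phi0, Hx. field. lra.
Qed.

Lemma exp_phi_shift eps mu : mu <> 0 ->
  exp eps * phi (eps / mu + mu / 2) = phi (eps / mu - mu / 2).
Proof. intros Hm. unfold phi. rewrite <- exp_plus. f_equal. field. exact Hm. Qed.

Lemma is_derive_Bed eps delta mu : 0 < mu ->
  is_derive (Bed eps delta) mu (phi (eps / mu - mu / 2) / sqrt (2 * PI)).
Proof.
intros Hm. assert (Hs := sqrt_2PI_pos).
apply (is_derive_ext (fun m => / 2 - Phi0 (eps / m - m / 2) / sqrt (2 * PI)
   - exp eps * (/ 2 - Phi0 (eps / m + m / 2) / sqrt (2 * PI)) - delta)).
{ intros m. unfold Bed. rewrite !Q_Phi0. reflexivity. }
auto_derive.
- repeat split; try (eexists; apply is_derive_Phi0); lra.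
- rewrite !(is_derive_unique _ _ _ (is_derive_Phi0 _)).
  replace (eps * / mu + - (mu * / 2)) with (eps / mu - mu / 2) by (unfold Rdiv; ring).
  replace (eps * / mu + mu * / 2) with (eps / mu + mu / 2) by (unfold Rdiv; ring).
  rewrite <- (exp_phi_shift eps mu) by lra. field. lra.
Qed.

Lemma continuity_pt_Bed eps delta mu : 0 < mu -> continuity_pt (Bed eps delta) mu.
Proof.
intros Hm. apply continuity_pt_filterlim.
apply (ex_derive_continuous (K := R_AbsRing) (V := R_NormedModule)).
eexists. apply is_derive_Bed, Hm.
Qed.

Lemma Bed_increasing eps delta m1 m2 : 0 < m1 -> m1 < m2 ->
  Bed eps delta m1 < Bed eps delta m2.
Proof.
intros H1 H12.
destruct (MVT_gen (Bed eps delta) m1 m2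
            (fun mu => phi (eps / mu - mu / 2) / sqrt (2 * PI))) as [c [_ Heq]].
- intros t Ht. rewrite Rmin_left, Rmax_right in Ht by lra. apply is_derive_Bed. lra.
- intros t Ht. rewrite Rmin_left, Rmax_right in Ht by lra. apply continuity_pt_Bed. lra.
- assert (0 < phi (eps / c - c / 2) / sqrt (2 * PI))
    by (apply Rdiv_lt_0_compat; [apply phi_pos|apply sqrt_2PI_pos]).
  nra.
Qed.

Section SqrtShift.

Variables eps q : R.
Hypothesis eps_pos : 0 < eps.

Let r := sqrt (q ^ 2 + 2 * eps).

Lemma sqrt_shift_sq : r * r = q ^ 2 + 2 * eps.
Proof. apply sqrt_sqrt. nra. Qed.

Lemma sqrt_shift_sub_pos : 0 < r - q.
Proof. assert (H := sqrt_shift_sq). assert (0 <= r) by apply sqrt_pos. nra. Qed.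

(* [eps = (r - q) (r + q) / 2], so [mu = r - q] solves [eps / mu -/+ mu / 2 = q, r]. *)
Lemma sqrt_shift_minus : eps / (r - q) - (r - q) / 2 = q.
Proof.
assert (H := sqrt_shift_sq). assert (Hp := sqrt_shift_sub_pos).
replace eps with ((r - q) * (r + q) / 2) by nra. field. lra.
Qed.

Lemma sqrt_shift_plus : eps / (r - q) + (r - q) / 2 = r.
Proof.
assert (H := sqrt_shift_sq). assert (Hp := sqrt_shift_sub_pos).
replace eps with ((r - q) * (r + q) / 2) by nra. field. lra.
Qed.

End SqrtShift.

Lemma Reps_pos eps x : 0 < eps -> 0 < Reps eps x.
Proof. apply sqrt_shift_sub_pos. Qed.

Lemma Bed_Reps eps delta x : 0 < eps ->
  Bed eps delta (Reps eps x)
  = Q (Qinv x) - exp eps * Q (sqrt (Qinv x ^ 2 + 2 * eps)) - delta.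
Proof.
intros He. unfold Bed, Reps.
rewrite sqrt_shift_minus, sqrt_shift_plus by exact He. reflexivity.
Qed.

Theorem mainTheorem3 (eps delta : R) :
  0 < eps -> 0 < delta < 1 ->
  delta + exp eps * Q (sqrt (2 * eps)) < 1 ->
  let delta' := delta + exp eps * Q (sqrt (2 * eps)) in
  (Bed eps delta (Reps eps delta) <= 0 /\ 0 <= Bed eps delta (Reps eps delta'))
  /\ (forall mu0 : R, 0 < mu0 -> Bed eps delta mu0 = 0 ->
        Reps eps delta <= mu0 <= Reps eps delta')
  /\ (exists mu0 : R, 0 < mu0 /\ Reps eps delta <= mu0 <= Reps eps delta'
        /\ Bed eps delta mu0 = 0).
Proof.
intros He Hd Hd1 delta'.
assert (Hexp := exp_pos eps).
assert (Hd' : 0 < delta' < 1).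
{ assert (H := Q_pos (sqrt (2 * eps))). unfold delta'. split; nra. }
assert (B_lo : Bed eps delta (Reps eps delta) <= 0).
{ rewrite Bed_Reps, Q_Qinv by assumption.
  assert (H := Q_pos (sqrt (Qinv delta ^ 2 + 2 * eps))). nra. }
assert (B_hi : 0 <= Bed eps delta (Reps eps delta')).
{ rewrite Bed_Reps, Q_Qinv by assumption.
  assert (H : Q (sqrt (Qinv delta' ^ 2 + 2 * eps)) <= Q (sqrt (2 * eps))).
  { apply Q_nonincreasing, sqrt_le_1_alt. nra. }
  set (Qr := Q (sqrt (Qinv delta' ^ 2 + 2 * eps))) in *. unfold delta'. nra. }
assert (Hincr := Bed_increasing eps delta).
assert (Hcont := continuity_pt_Bed eps delta).
assert (Ha := Reps_pos eps delta He). assert (Hb := Reps_pos eps delta' He).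
split; [split; assumption|split].
- apply (root_between _ Hincr _ _ Hb B_lo B_hi).
- apply (exists_root_between _ Hincr Hcont _ _ Ha Hb B_lo B_hi).
Qed.
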